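(* Let $A\in\mathbb{R}^{n_x\times n_x}$, $B\in\mathbb{R}^{n_x\times m}$, $C\in\mathbb{R}^{n_y\times n_x}$ and $D\in\mathbb{R}^{n_y\times m}$, and let $0<\mu_y\le\nu_y$. Set $\alpha_y=\frac{\nu_y+\mu_y}{2}$ and $\beta_y=\frac{\nu_y-\mu_y}{2}$. Suppose there exist a symmetric matrix $Q\succ0$, matrices $U\in\mathbb{R}^{n_x\times n_x}$ and $V\in\mathbb{R}^{n_x\times n_y}$, and scalars $\eta>0$ and $\rho_o\in(0,1)$ such that $$\begin{bmatrix}(1-\rho_o)Q-\eta C^\mathsf{T}C & (UA+\alpha_yVC)^\mathsf{T} & 0\\ UA+\alpha_yVC & U+U^\mathsf{T}-Q & \beta_yV\\ 0 & \beta_yV^\mathsf{T} & \eta I\end{bmatrix}\succ0.$$ Then $U$ is invertible; set $L=U^{-1}V$. Let $\mathcal{S}_u:\mathbb{R}^m\to\mathbb{R}^m$ be arbitrary. Let $\mathcal{S}_y:\mathbb{R}^{n_y}\to\mathbb{R}^{n_y}$ be continuously differentiable with Jacobian satisfying $\|\mathcal{J}^y(z)-\alpha_yI\|\le\beta_y$ for all $z$. When $n_y=1$, this is equivalent to $\mu_y\le\mathcal{S}_y'(z)\le\nu_y$. Consider the SSM $x_{k+1}=Ax_k+B\mathcal{S}_u(u_k)$, $y_k=\mathcal{S}_y(Cx_k+D\mathcal{S}_u(u_k))$, together with the observer $$\hat x_{k+1}=A\hat x_k+B\mathcal{S}_u(u_k)+L(\hat y_k-y_k),\qquad \hat y_k=\mathcal{S}_y\big(C\hat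 x_k+D\mathcal{S}_u(u_k)\big).$$ Then for every input sequence $(u_k)$ and every pair of initial conditions $x_0,\hat x_0$, the following hold. (i) If $\hat x_0=x_0$, then $\hat x_k=x_k$ for all $k\ge0$. (ii) The estimation error converges exponentially: $$\|Q^{1/2}(\hat x_k-x_k)\|\le(1-\rho_o)^{k/2}\|Q^{1/2}(\hat x_0-x_0)\|\quad\text{for all }k\ge0.$$
   Context: $\|\cdot\|$ denotes the Euclidean norm and the induced spectral matrix norm. $M\succ0$ means $M$ is symmetric positive definite. The set $\{\alpha_yI+\beta_y\Delta:\|\Delta\|\le1\}$ is the uncertainty set the paper uses to cover Jacobians of $(\mu_y,\nu_y)$-bi-Lipschitz output nonlinearities $\mathcal{S}_y$. *)

From HB Require Import structures.
From mathcomp Require Import all_boot all_order all_algebra.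
From mathcomp Require Import all_classical all_reals all_analysis.
Set Implicit Arguments. Unset Strict Implicit. Unset Printing Implicit Defensive.
Import Order.TTheory GRing.Theory Num.Theory.
Import numFieldNormedType.Exports.
Local Open Scope ring_scope.

Definition posdef {R : realType} {n : nat} (M : 'M[R]_n) : Prop :=
  M^T = M /\ forall x : 'cV[R]_n, x != 0 -> 0 < (x^T *m M *m x) 0 0.

Definition possemidef {R : realType} {n : nat} (M : 'M[R]_n) : Prop :=
  M^T = M /\ forall x : 'cV[R]_n, 0 <= (x^T *m M *m x) 0 0.

Definition enorm {R : realType} {n : nat} (v : 'cV[R]_n) : R :=
  Num.sqrt (\sum_i (v i 0) ^+ 2).

Definition spec_norm_le {R : realType} {p q : nat} (M : 'M[R]_(p, q)) (b : R) : Prop :=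
  forall v : 'cV[R]_q, enorm (M *m v) <= b * enorm v.

Definition jacobian_col {R : realType} {n p : nat}
  (f : 'cV[R]_n -> 'cV[R]_p) (z : 'cV[R]_n) : 'M[R]_(p, n) :=
  \matrix_(i, j) ('d f z (delta_mx j 0 : 'cV[R]_n)) i 0.

Definition C1 {R : realType} {n p : nat} (f : 'cV[R]_n -> 'cV[R]_p) : Prop :=
  (forall z, differentiable f z) /\ continuous (jacobian_col f).

Definition observer_lmi {R : realType} {nx ny : nat}
  (A : 'M[R]_nx) (C : 'M[R]_(ny, nx)) (Q U : 'M[R]_nx) (V : 'M[R]_(nx, ny))
  (alpha beta eta rho : R) : 'M[R]_(nx + nx + ny) :=
  block_mx
    (block_mx ((1 - rho) *: Q - eta *: (C^T *m C)) (U *m A + alpha *: (V *m C))^T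
              (U *m A + alpha *: (V *m C)) (U + U^T - Q))
    (col_mx (0 : 'M[R]_(nx, ny)) (beta *: V))
    (row_mx (0 : 'M[R]_(ny, nx)) (beta *: V^T))
    (eta%:M).

From HB Require Import structures.
From mathcomp Require Import all_boot all_order all_algebra.
From mathcomp Require Import all_classical all_reals all_analysis.
From mathcomp Require Import ring lra.
Set Implicit Arguments. Unset Strict Implicit. Unset Printing Implicit Defensive.
Import Order.TTheory GRing.Theory Num.Theory.
Import numFieldNormedType.Exports.
Local Open Scope ring_scope.

(* With e_k = xh_k - x_k the error obeys e_{k+1} = A e_k + L (S_y a - S_y b)
   with a - b = C e_k.  The mean value theorem turns the Jacobian bound into
   S_y a - S_y b = alpha (a - b) + beta w with |w| <= |C e_k|, hence
   U e_{k+1} = (U A + alpha V C) e_k + beta V w.  Evaluated at (e_k, -e_{k+1}, w)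
   the LMI form loses all its U-terms and reads
   (1 - rho) e_k'Q e_k - e_{k+1}'Q e_{k+1} + eta (|w|^2 - |C e_k|^2) >= 0,
   so the Q-energy of the error contracts by 1 - rho at every step.  At (0, s, 0)
   the form is 2 s'U s - s'Q s, which forces U to be injective. *)

Lemma mulmx_tr_col_block (R : pzRingType) p q (x : 'cV[R]_p) (y : 'cV[R]_q)
    (Aul : 'M[R]_p) (Aur : 'M[R]_(p, q)) (Adl : 'M[R]_(q, p)) (Adr : 'M[R]_q) :
  (col_mx x y)^T *m block_mx Aul Aur Adl Adr *m col_mx x y =
  x^T *m Aul *m x + x^T *m Aur *m y + (y^T *m Adl *m x + y^T *m Adr *m y).
Proof. by rewrite tr_col_mx mul_row_block mul_row_col !mulmxDl addrACA. Qed.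

Section Euclidean.
Variable R : realType.

Definition dot n (u v : 'cV[R]_n) : R := \tr (u^T *m v).

Lemma mxtrace11 (X : 'M[R]_1) : \tr X = X 0 0.
Proof. by rewrite /mxtrace big_ord1. Qed.

Lemma dotE n (u v : 'cV[R]_n) : dot u v = \sum_i u i 0 * v i 0.
Proof. by rewrite /dot mxtrace11 mxE; apply: eq_bigr => i _; rewrite mxE. Qed.

Lemma dotC n (u v : 'cV[R]_n) : dot u v = dot v u.
Proof. by rewrite /dot -mxtrace_tr trmx_mul trmxK. Qed.

Lemma dot_trmx n p (u : 'cV[R]_p) (M : 'M[R]_(n, p)) v : dot u (M^T *m v) = dot v (M *m u).
Proof. by rewrite /dot -mxtrace_tr !trmx_mul !trmxK mulmxA. Qed.

Lemma dot0r n (u : 'cV[R]_n) : dot u 0 = 0.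
Proof. by rewrite /dot mulmx0 mxtrace0. Qed.

Lemma dotNl n (u v : 'cV[R]_n) : dot (- u) v = - dot u v.
Proof. by rewrite /dot raddfN mulNmx raddfN. Qed.

Lemma dotDr n (u v w : 'cV[R]_n) : dot u (v + w) = dot u v + dot u w.
Proof. by rewrite /dot mulmxDr mxtraceD. Qed.

Lemma dotNr n (u v : 'cV[R]_n) : dot u (- v) = - dot u v.
Proof. by rewrite /dot mulmxN raddfN. Qed.

Lemma dotBr n (u v w : 'cV[R]_n) : dot u (v - w) = dot u v - dot u w.
Proof. by rewrite dotDr dotNr. Qed.

Lemma dotZr n (u v : 'cV[R]_n) c : dot u (c *: v) = c * dot u v.
Proof. by rewrite /dot -scalemxAr mxtraceZ. Qed.

Lemma form_dot n p (u : 'cV[R]_n) (M : 'M[R]_(n, p)) v : (u^T *m M *m v) 0 0 = dot u (M *m v).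
Proof. by rewrite /dot mulmxA mxtrace11. Qed.

Lemma posdef_possemidef n (M : 'M[R]_n) : posdef M -> possemidef M.
Proof.
case=> MT M_gt0; split=> // x; have [->|/M_gt0/ltW//] := eqVneq x 0.
by rewrite form_dot mulmx0 dot0r.
Qed.

Lemma enormE n (v : 'cV[R]_n) : enorm v = Num.sqrt (dot v v).
Proof. by rewrite dotE /enorm; congr Num.sqrt; apply: eq_bigr => i _; rewrite expr2. Qed.

Lemma dot_ge0 n (v : 'cV[R]_n) : 0 <= dot v v.
Proof. by rewrite dotE; apply: sumr_ge0 => i _; rewrite -expr2 sqr_ge0. Qed.

Lemma enorm_ge0 n (v : 'cV[R]_n) : 0 <= enorm v.
Proof. exact: sqrtr_ge0. Qed.

Lemma enorm_sqr n (v : 'cV[R]_n) : enorm v ^+ 2 = dot v v.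
Proof. by rewrite enormE sqr_sqrtr ?dot_ge0. Qed.

Lemma enorm_eq0 n (v : 'cV[R]_n) : (enorm v == 0) = (v == 0).
Proof.
apply/idP/eqP => [|->]; last by rewrite enormE dot0r sqrtr0.
rewrite /enorm sqrtr_eq0 => le0; apply/matrixP => i j; rewrite ord1 mxE.
apply/eqP; rewrite -sqrf_eq0; apply/eqP.
apply: (psumr_eq0P (P := xpredT) (fun k _ => sqr_ge0 (v k 0))) => //.
by apply/le_anti; rewrite le0 /=; apply: sumr_ge0 => k _; rewrite sqr_ge0.
Qed.

Lemma enormZ n (v : 'cV[R]_n) c : enorm (c *: v) = `|c| * enorm v.
Proof.
by rewrite !enormE dotZr dotC dotZr mulrA -expr2 sqrtrM ?sqr_ge0 // sqrtr_sqr.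
Qed.

Lemma enorm_sqr_mulmx n (M P : 'M[R]_n) v :
  P^T = P -> P *m P = M -> enorm (P *m v) ^+ 2 = dot v (M *m v).
Proof. by move=> PT PPM; rewrite enorm_sqr -{1}PT dotC dot_trmx mulmxA PPM. Qed.

Lemma dot_le_sqr n (u v : 'cV[R]_n) : 2 * dot u v <= dot u u + dot v v.
Proof.
have := dot_ge0 (u - v); rewrite dotBr ![dot (u - v) _]dotC !dotBr (dotC v u); lra.
Qed.

End Euclidean.

Section SectorBound.
Variable R : realType.

Lemma diff_jacobian_col n p (f : 'cV[R]_n -> 'cV[R]_p) z v :
  'd f z v = jacobian_col f z *m v.
Proof.
have vE : v = \sum_(j < n) v j 0 *: (delta_mx j 0 : 'cV[R]_n).
  apply/matrixP => i k; rewrite summxE (bigD1 i) //= big1 ?addr0.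
    by rewrite !mxE ord1 !eqxx mulr1.
  by move=> j /negbTE ji; rewrite !mxE eq_sym ji mulr0.
rewrite {1}vE linear_sum; apply/matrixP => i k; rewrite (ord1 k) summxE !mxE.
by apply: eq_bigr => j _; rewrite linearZ /= !mxE mulrC.
Qed.

Lemma is_derive_line n p (f : 'cV[R]_n -> 'cV[R]_p) (b d : 'cV[R]_n) (c : R) :
  differentiable f (b + c *: d) ->
  is_derive c 1 (fun t : R => f (b + t *: d)) ('d f (b + c *: d) d).
Proof.
move=> df; have quotE : (fun h : R => h^-1 *: (f (b + (h *: 1 + c) *: d) - f (b + c *: d)))
  = (fun h : R => h^-1 *: (f (h *: d + (b + c *: d)) - f (b + c *: d))).
  by apply/funext => h; rewrite [h *: 1]mulr1 scalerDl addrCA.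
split; first by rewrite /derivable /= quotE; exact: diff_derivable.
by rewrite /derive /= quotE; exact: deriveE.
Qed.

Lemma is_derive_dotr n (u : 'cV[R]_n) (g : R -> 'cV[R]_n) (c : R) (dg : 'cV[R]_n) :
  is_derive c 1 g dg -> is_derive c 1 (fun t => dot u (g t)) (dot u dg).
Proof.
move=> [/derivable_mxP gc <-].
have -> : (fun t => dot u (g t)) = \sum_(i < n) (u i 0 \*: fun t => g t i 0).
  by apply/funext => t; rewrite dotE fct_sumE.
rewrite derive_mx ?dotE; last exact/derivable_mxP.
apply: is_derive_sum => i; rewrite mxE.
by apply: is_deriveZ; apply: derivableP.
Qed.

Lemma sector_mean_value n (f : 'cV[R]_n -> 'cV[R]_n) (al be : R) :
  (forall z, differentiable f z) ->
  (forall z, spec_norm_le (jacobian_col f z - al%:M) be) -> 0 <= be ->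
  forall a b, enorm (f a - f b - al *: (a - b)) <= be * enorm (a - b).
Proof.
move=> df J_sector be0 a b.
set dl := f a - f b - al *: (a - b); set d := a - b.
pose phi := (fun t => dot dl (f (b + t *: d))) - (al * dot dl d) \*: @id R.
pose dphi (t : R) := dot dl ('d f (b + t *: d) d) - (al * dot dl d) *: 1.
(* The mean value theorem along the segment gives |dl|^2 = <dl, v>; with
   2 <dl, v> <= |dl|^2 + |v|^2 this yields |dl| <= |v|. *)
have phi' (t : R) : is_derive t 1 phi (dphi t).
  by apply: is_deriveB; apply: is_derive_dotr; apply: is_derive_line.
have [|c _] := MVT ltr01 (fun t _ => phi' t).
  by apply: derivable_within_continuous => t _; have [] := phi' t.
have -> : phi 1 - phi 0 = dot dl dl.
  have phiE (t : R) : phi t = dot dl (f (b + t *: d)) - al * dot dl d * t by [].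
  have bdE : b + d = a by rewrite addrC subrK.
  rewrite !phiE scale0r addr0 scale1r bdE mulr1 mulr0 subr0.
  by rewrite -dotZr addrAC -!dotBr.
set v := (jacobian_col f (b + c *: d) - al%:M) *m d.
have -> : dphi c * (1 - 0) = dot dl v.
  rewrite /dphi [_ *: 1]mulr1 subr0 mulr1 diff_jacobian_col.
  by rewrite /v mulmxBl mul_scalar_mx [RHS]dotBr dotZr.
move=> dl_dl.
have v_le : enorm v <= be * enorm d := J_sector _ d.
have := dot_le_sqr dl v; rewrite -dl_dl -!enorm_sqr => dl_le_v.
rewrite -(ler_sqr (enorm_ge0 _)) ?nnegrE ?mulr_ge0 ?enorm_ge0 //.
apply: le_trans (_ : enorm v ^+ 2 <= _); first lra.
by rewrite ler_sqr ?nnegrE ?mulr_ge0 ?enorm_ge0.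
Qed.

Lemma enorm_le_scale n (be r : R) (d : 'cV[R]_n) :
  0 <= be -> 0 <= r -> enorm d <= be * r -> exists2 w, d = be *: w & enorm w <= r.
Proof.
rewrite le0r => /predU1P[-> r0|be_gt0 _ d_le].
  rewrite mul0r => d_le0; exists 0; last by rewrite enormE dot0r sqrtr0.
  by rewrite scaler0; apply/eqP; rewrite -enorm_eq0 eq_le d_le0 enorm_ge0.
exists (be^-1 *: d); first by rewrite scalerA mulfV ?gt_eqF // scale1r.
by rewrite enormZ gtr0_norm ?invr_gt0 // ler_pdivrMl.
Qed.

End SectorBound.

Section ObserverLMI.
Variables (R : realType) (nx ny : nat).
Variables (A : 'M[R]_nx) (C : 'M[R]_(ny, nx)) (Q U : 'M[R]_nx) (V : 'M[R]_(nx, ny)).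
Variables (al be eta rho : R).

Let M := observer_lmi A C Q U V al be eta rho.
Let G := U *m A + al *: (V *m C).

Lemma observer_lmi_form (e s : 'cV[R]_nx) (w : 'cV[R]_ny) :
  let z := col_mx (col_mx e s) w in
  \tr (z^T *m M *m z) =
  (1 - rho) * dot e (Q *m e) - eta * dot (C *m e) (C *m e)
  + 2 * dot s (G *m e) + 2 * dot s (U *m s) - dot s (Q *m s)
  + 2 * be * dot s (V *m w) + eta * dot w w.
Proof.
rewrite /M /observer_lmi -/G !mulmx_tr_col_block tr_col_mx !mul_row_col.
rewrite mul_mx_row mul_row_col !(mulmx0, mul0mx, add0r, addr0) -!mulmxA.
rewrite !(mulmxBl, mulmxDl, mulmxBr, mulmxDr) !(raddfB, mxtraceD).
rewrite -!scalemxAl -!scalemxAr !mxtraceZ -![\tr (_^T *m _)]/(dot _ _).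
rewrite mul_scalar_mx !(dotNr, dotZr, dotDr) -!mulmxA !dot_trmx /G mulmxDl.
rewrite -scalemxAl !(dotDr, dotZr) -!mulmxA.
ring.
Qed.

Lemma observer_lmi_unitmx : posdef Q -> possemidef M -> U \in unitmx.
Proof.
move=> [_ Q_gt0] [_ M_ge0].
have U_inj (s : 'cV[R]_nx) : U *m s = 0 -> s = 0.
  move=> Us0; have [//|s_neq0] := eqVneq s 0; exfalso.
  have := Q_gt0 s s_neq0; rewrite form_dot.
  have := M_ge0 (col_mx (col_mx 0 s) 0).
  rewrite -mxtrace11 observer_lmi_form !mulmx0 Us0 !dot0r; lra.
rewrite -unitmx_tr -row_free_unit; apply: inj_row_free => v vU0.
apply: trmx_inj; rewrite trmx0; apply: U_inj.
by rewrite -[U]trmxK -trmx_mul vU0 trmx0.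
Qed.

Lemma observer_error_lmi (e e' : 'cV[R]_nx) (w : 'cV[R]_ny) :
  U \in unitmx ->
  e' = A *m e + invmx U *m V *m (al *: (C *m e) + be *: w) ->
  U *m e' = G *m e + be *: (V *m w).
Proof.
move=> U_unit ->; rewrite mulmxDr !mulmxA mulmxV // mul1mx mulmxDr /G mulmxDl.
by rewrite -!scalemxAr -scalemxAl !mulmxA addrA.
Qed.

Lemma observer_lmi_decrease (e e' : 'cV[R]_nx) (w : 'cV[R]_ny) :
  possemidef M -> 0 <= eta ->
  U *m e' = G *m e + be *: (V *m w) -> enorm w <= enorm (C *m e) ->
  dot e' (Q *m e') <= (1 - rho) * dot e (Q *m e).
Proof.
move=> [_ M_ge0] eta_ge0 Ue' w_le.
have := M_ge0 (col_mx (col_mx e (- e')) w).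
rewrite -mxtrace11 observer_lmi_form !mulmxN !dotNl !dotNr opprK.
have eUe : dot e' (U *m e') = dot e' (G *m e) + be * dot e' (V *m w).
  by rewrite Ue' dotDr dotZr.
have ww : eta * dot w w <= eta * dot (C *m e) (C *m e).
  by rewrite ler_wpM2l // -!enorm_sqr ler_sqr ?nnegrE ?enorm_ge0.
lra.
Qed.

End ObserverLMI.

Theorem mainTheorem4 (R : realType) (nx m ny : nat)
  (A : 'M[R]_nx) (B : 'M[R]_(nx, m)) (C : 'M[R]_(ny, nx)) (D : 'M[R]_(ny, m))
  (mu_y nu_y : R) (Hmu : 0 < mu_y) (Hmunu : mu_y <= nu_y)
  (Q U : 'M[R]_nx) (V : 'M[R]_(nx, ny)) (eta rho_o : R)
  (HQ : posdef Q) (Heta : 0 < eta) (Hrho0 : 0 < rho_o) (Hrho1 : rho_o < 1)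
  (HLMI : posdef (observer_lmi A C Q U V
                    ((nu_y + mu_y) / 2) ((nu_y - mu_y) / 2) eta rho_o)) :
  U \in unitmx /\
  let alpha_y := (nu_y + mu_y) / 2 in
  let beta_y := (nu_y - mu_y) / 2 in
  let L := invmx U *m V in
  forall (S_u : 'cV[R]_m -> 'cV[R]_m) (S_y : 'cV[R]_ny -> 'cV[R]_ny),
  C1 S_y ->
  (forall z, spec_norm_le (jacobian_col S_y z - alpha_y%:M) beta_y) ->
  forall (u : nat -> 'cV[R]_m) (x xh : nat -> 'cV[R]_nx),
  let y := fun k => S_y (C *m x k + D *m S_u (u k)) in
  let yh := fun k => S_y (C *m xh k + D *m S_u (u k)) in
  (forall k, x k.+1 = A *m x k + B *m S_u (u k)) ->
  (forall k, xh k.+1 = A *m xh k + B *m S_u (u k) + L *m (yh k - y k)) ->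
  (xh 0%N = x 0%N -> forall k, xh k = x k) /\
  (forall Qh : 'M[R]_nx, possemidef Qh -> Qh *m Qh = Q ->
     forall k, enorm (Qh *m (xh k - x k))
               <= Num.sqrt (1 - rho_o) ^+ k * enorm (Qh *m (xh 0%N - x 0%N))).
Proof.
have LMI := posdef_possemidef HLMI.
have U_unit := observer_lmi_unitmx HQ LMI.
split=> // al be L S_u S_y [S_diff _] S_sector u x xh y yh Hx Hxh.
have be_ge0 : 0 <= be by rewrite divr_ge0 // subr_ge0.
have r_ge0 : 0 <= 1 - rho_o by rewrite subr_ge0 ltW.
split=> [x0|Qh [QhT _] QhQ k].
  by elim=> // k IH; rewrite Hxh Hx /yh /y IH subrr mulmx0 addr0.
pose e k := xh k - x k.
have decrease j : dot (e j.+1) (Q *m e j.+1) <= (1 - rho_o) * dot (e j) (Q *m e j).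
  set a := C *m xh j + D *m S_u (u j); set b := C *m x j + D *m S_u (u j).
  have abE : a - b = C *m e j by rewrite /a /b /e mulmxBr opprD addrACA subrr addr0.
  have := sector_mean_value S_diff S_sector be_ge0 a b; rewrite abE.
  case/(enorm_le_scale be_ge0 (enorm_ge0 _)) => w dlE w_le.
  apply: (observer_lmi_decrease LMI (ltW Heta) _ w_le); apply: observer_error_lmi => //.
  have -> : e j.+1 = A *m e j + L *m (yh j - y j).
    by rewrite /e Hxh Hx addrAC opprD addrACA subrr addr0 -mulmxBr.
  by rewrite /yh /y -/a -/b -dlE -abE /al [_ *: _ + _]addrC subrK.
have geom j : dot (e j) (Q *m e j) <= (1 - rho_o) ^+ j * dot (e 0%N) (Q *m e 0%N).
  elim: j => [|j IH]; first by rewrite expr0 mul1r.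
  by rewrite exprS -mulrA (le_trans (decrease j)) // ler_wpM2l.
rewrite -ler_sqr ?nnegrE ?mulr_ge0 ?exprn_ge0 ?sqrtr_ge0 ?enorm_ge0 //.
by rewrite exprMn -exprAC (sqr_sqrtr r_ge0) !(enorm_sqr_mulmx _ QhT QhQ) geom.
Qed.
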